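(* For every problem $\alpha$ of QHC: $\neg\neg\alpha\Leftrightarrow\nabla\alpha$ holds if and only if the proposition $?\alpha$ is stable, i.e. if and only if $\neg !\neg ?\alpha\Rightarrow\, !?\alpha$.
   Context: QHC is a two-sorted first-order calculus. Its only terms are individual variables. Every formula is either a problem (denoted by Greek letters $\alpha,\beta,\gamma,\dots$) or a proposition (denoted by Latin letters $p,q,\dots$). Atomic formulas are proposition variables $p(t_1,\dots,t_n)$ (of proposition type), problem variables $\pi(t_1,\dots,t_n)$ (of problem type), and the constants $0$ (a proposition, classical falsity) and $\bot$ (a problem, intuitionistic absurdity). Propositions are closed under the classical connectives $\land,\lor,\to$ and quantifiers $\exists,\forall$; problems are closed under the intuitionistic connectives $\land,\lor,\to$ and quantifiers $\exists,\forall$ (the same symbols are used, distinguished by the type of the arguments). $\neg p$ abbreviates $p\to 0$, $\neg\alpha$ abbreviates $\alpha\to\bot$, and $\leftrightarrow$ is defined as usual. There are two type-conversion operators: if $p$ is a proposition then $!p$ is a problem, and if $\alpha$ is a problem then $?\alpha$ is a proposition. Deductive system of QHC: all axioms and rules of classical predicate logic applied to all propositions; all postulates and rules of intuitionistic predicate logic applied to all problems; the rules $p\,/\,!p$ and $\alpha\,/\,?\alpha$; and the schemas $?!p\to p$; $\alpha\to\, !?\alpha$; $!(p\to q)\to(!p\to !q)$; $?(\alpha\to\beta)\to(?\alpha\to ?\beta)$; $!0\to\bot$; $?(\alpha\land\beta)\leftrightarrow ?\alpha\land ?\beta$; $?(\alpha\lor\beta)\leftrightarrow ?\alpha\lor ?\beta$;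 $?\bot\to 0$; $?\exists x\,\alpha(x)\leftrightarrow\exists x\,?\alpha(x)$; $?\forall x\,\alpha(x)\to\forall x\,?\alpha(x)$ (usual variable side conditions implicit). $\vdash A$ means $A$ is derivable in QHC; $A\Rightarrow B$ means $\vdash A\to B$ and $A\Leftrightarrow B$ means $\vdash A\leftrightarrow B$ (with $A,B$ of the same type); $A\vdash B$ means $B$ is derivable in QHC from the premise $A$. Notation: $\Box p := ?!p$ (a proposition) and $\nabla\alpha := !?\alpha$ (a problem). QC and QH denote classical and intuitionistic predicate calculus. A proposition $p$ is stable if $\neg !\neg p\Rightarrow\, !p$. *)

(* Syntax and Hilbert-style deductive system of the two-sorted
   calculus QHC.  Individual variables are de Bruijn indices (nat); the only
   terms are variables, so substitution is renaming. *)
From Stdlib Require Import List.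
Import ListNotations.

(* Propositions (classical sort) and problems (intuitionistic sort). *)
Inductive prop : Type :=
| PVar  : nat -> list nat -> prop
| PZero : prop
| PAnd  : prop -> prop -> prop
| POr   : prop -> prop -> prop
| PImp  : prop -> prop -> prop
| PEx   : prop -> prop                   (* exists x (binds de Bruijn index 0) *)
| PAll  : prop -> prop
| PQ    : prob -> prop                   (* ?alpha *)
with prob : Type :=
| QVar  : nat -> list nat -> prob
| QBot  : prob
| QAnd  : prob -> prob -> prob
| QOr   : prob -> prob -> prob
| QImp  : prob -> prob -> prob
| QEx   : prob -> prob
| QAll  : prob -> prob
| QBang : prop -> prob.                  (* !p *)

Definition up (f : nat -> nat) : nat -> nat :=
  fun n => match n with 0 => 0 | S m => S (f m) end.

Fixpoint ren_p (f : nat -> nat) (p : prop) : prop :=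
  match p with
  | PVar n ts => PVar n (map f ts)
  | PZero => PZero
  | PAnd a b => PAnd (ren_p f a) (ren_p f b)
  | POr a b => POr (ren_p f a) (ren_p f b)
  | PImp a b => PImp (ren_p f a) (ren_p f b)
  | PEx a => PEx (ren_p (up f) a)
  | PAll a => PAll (ren_p (up f) a)
  | PQ a => PQ (ren_q f a)
  end
with ren_q (f : nat -> nat) (a : prob) : prob :=
  match a with
  | QVar n ts => QVar n (map f ts)
  | QBot => QBot
  | QAnd a b => QAnd (ren_q f a) (ren_q f b)
  | QOr a b => QOr (ren_q f a) (ren_q f b)
  | QImp a b => QImp (ren_q f a) (ren_q f b)
  | QEx a => QEx (ren_q (up f) a)
  | QAll a => QAll (ren_q (up f) a)
  | QBang p => QBang (ren_p f p)
  end.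

(* Substitution of the variable t for the bound variable 0 (body of a quantifier). *)
Definition inst (t : nat) : nat -> nat :=
  fun n => match n with 0 => t | S m => m end.
Definition inst_p (t : nat) (p : prop) : prop := ren_p (inst t) p.
Definition inst_q (t : nat) (a : prob) : prob := ren_q (inst t) a.
(* Weakening: a formula not mentioning the new bound variable. *)
Definition shift_p (p : prop) : prop := ren_p S p.
Definition shift_q (a : prob) : prob := ren_q S a.

Definition PNeg (p : prop) : prop := PImp p PZero.
Definition QNeg (a : prob) : prob := QImp a QBot.
Definition PIff (p q : prop) : prop := PAnd (PImp p q) (PImp q p).
Definition QIff (a b : prob) : prob := QAnd (QImp a b) (QImp b a).
Definition Box (p : prop) : prop := PQ (QBang p).
Definition Nabla (a : prob) : prob := QBang (PQ a).

Inductive ProvP : prop -> Prop :=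
| P_K   : forall p q, ProvP (PImp p (PImp q p))
| P_S   : forall p q r, ProvP (PImp (PImp p (PImp q r)) (PImp (PImp p q) (PImp p r)))
| P_AE1 : forall p q, ProvP (PImp (PAnd p q) p)
| P_AE2 : forall p q, ProvP (PImp (PAnd p q) q)
| P_AI  : forall p q, ProvP (PImp p (PImp q (PAnd p q)))
| P_OI1 : forall p q, ProvP (PImp p (POr p q))
| P_OI2 : forall p q, ProvP (PImp q (POr p q))
| P_OE  : forall p q r, ProvP (PImp (PImp p r) (PImp (PImp q r) (PImp (POr p q) r)))
| P_EFQ : forall p, ProvP (PImp PZero p)
| P_DNE : forall p, ProvP (PImp (PNeg (PNeg p)) p)
| P_AllE : forall p t, ProvP (PImp (PAll p) (inst_p t p))
| P_ExI  : forall p t, ProvP (PImp (inst_p t p) (PEx p))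
| P_MP  : forall p q, ProvP (PImp p q) -> ProvP p -> ProvP q
| P_AllR : forall p q, ProvP (PImp (shift_p q) p) -> ProvP (PImp q (PAll p))
| P_ExR  : forall p q, ProvP (PImp p (shift_p q)) -> ProvP (PImp (PEx p) q)
| P_Quest : forall a, ProvQ a -> ProvP (PQ a)
| P_BoxT  : forall p, ProvP (PImp (PQ (QBang p)) p)
| P_QK    : forall a b, ProvP (PImp (PQ (QImp a b)) (PImp (PQ a) (PQ b)))
| P_QAnd  : forall a b, ProvP (PIff (PQ (QAnd a b)) (PAnd (PQ a) (PQ b)))
| P_QOr   : forall a b, ProvP (PIff (PQ (QOr a b)) (POr (PQ a) (PQ b)))
| P_QBot  : ProvP (PImp (PQ QBot) PZero)
| P_QEx   : forall a, ProvP (PIff (PQ (QEx a)) (PEx (PQ a)))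
| P_QAll  : forall a, ProvP (PImp (PQ (QAll a)) (PAll (PQ a)))
with ProvQ : prob -> Prop :=
| Q_K   : forall a b, ProvQ (QImp a (QImp b a))
| Q_S   : forall a b c, ProvQ (QImp (QImp a (QImp b c)) (QImp (QImp a b) (QImp a c)))
| Q_AE1 : forall a b, ProvQ (QImp (QAnd a b) a)
| Q_AE2 : forall a b, ProvQ (QImp (QAnd a b) b)
| Q_AI  : forall a b, ProvQ (QImp a (QImp b (QAnd a b)))
| Q_OI1 : forall a b, ProvQ (QImp a (QOr a b))
| Q_OI2 : forall a b, ProvQ (QImp b (QOr a b))
| Q_OE  : forall a b c, ProvQ (QImp (QImp a c) (QImp (QImp b c) (QImp (QOr a b) c)))
| Q_EFQ : forall a, ProvQ (QImp QBot a)
| Q_AllE : forall a t, ProvQ (QImp (QAll a) (inst_q t a))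
| Q_ExI  : forall a t, ProvQ (QImp (inst_q t a) (QEx a))
| Q_MP  : forall a b, ProvQ (QImp a b) -> ProvQ a -> ProvQ b
| Q_AllR : forall a b, ProvQ (QImp (shift_q b) a) -> ProvQ (QImp b (QAll a))
| Q_ExR  : forall a b, ProvQ (QImp a (shift_q b)) -> ProvQ (QImp (QEx a) b)
| Q_Bang : forall p, ProvP p -> ProvQ (QBang p)
| Q_NablaI : forall a, ProvQ (QImp a (QBang (PQ a)))
| Q_BK     : forall p q, ProvQ (QImp (QBang (PImp p q)) (QImp (QBang p) (QBang q)))
| Q_B0     : ProvQ (QImp (QBang PZero) QBot).

Definition QEntails (a b : prob) : Prop := ProvQ (QImp a b).
Definition QEquiv (a b : prob) : Prop := ProvQ (QIff a b).

Definition stable (p : prop) : Prop :=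
  QEntails (QNeg (QBang (PNeg p))) (QBang p).

(* The proof rests on two facts valid for every problem a:
   (1) ~a <=> !~?a.  Forward: a refutation of a yields, via a => !?a and the
       classical law ?~a -> ~?a, the problem !~?a.  Backward: !~p refutes !p
       for every proposition p (since !0 => bot), and a => !?a.
   (2) Nabla a => ~~a, because ~a => !~?a => ~!?a.
   By (2) the equivalence ~~a <=> Nabla a reduces to the single implication
   ~~a => !?a, and by contraposing (1) its premise ~~a may be replaced by the
   equivalent ~!~?a, which is exactly the stability of ?a. *)

Lemma q_weaken a b : ProvQ b -> ProvQ (QImp a b).
Proof. intro Hb. exact (Q_MP _ _ (Q_K b a) Hb). Qed.

Lemma q_apply a b c :
  ProvQ (QImp a (QImp b c)) -> ProvQ (QImp a b) -> ProvQ (QImp a c).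
Proof. intros Habc Hab. exact (Q_MP _ _ (Q_MP _ _ (Q_S a b c) Habc) Hab). Qed.

Lemma q_refl a : ProvQ (QImp a a).
Proof. apply (q_apply a (QImp a a) a); apply Q_K. Qed.

Lemma q_trans a b c : ProvQ (QImp a b) -> ProvQ (QImp b c) -> ProvQ (QImp a c).
Proof. intros Hab Hbc. apply (q_apply a b c); [apply q_weaken; exact Hbc | exact Hab]. Qed.

Lemma q_post a b c : ProvQ (QImp b c) -> ProvQ (QImp (QImp a b) (QImp a c)).
Proof. intro Hbc. apply (Q_MP _ _ (Q_S a b c)). apply q_weaken; exact Hbc. Qed.

Lemma q_swap a b c : ProvQ (QImp a (QImp b c)) -> ProvQ (QImp b (QImp a c)).
Proof.
  intro Habc. apply (q_trans b (QImp a b) (QImp a c)).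
  - apply Q_K.
  - exact (Q_MP _ _ (Q_S a b c) Habc).
Qed.

Lemma q_contra a b : ProvQ (QImp a b) -> ProvQ (QImp (QNeg b) (QNeg a)).
Proof.
  intro Hab. unfold QNeg. apply q_swap. apply (q_trans a b); [exact Hab |].
  apply q_swap, q_refl.
Qed.

Lemma p_weaken p q : ProvP q -> ProvP (PImp p q).
Proof. intro Hq. exact (P_MP _ _ (P_K q p) Hq). Qed.

Lemma p_trans p q r : ProvP (PImp p q) -> ProvP (PImp q r) -> ProvP (PImp p r).
Proof.
  intros Hpq Hqr. apply (P_MP _ _ (P_MP _ _ (P_S p q r) (p_weaken p _ Hqr))). exact Hpq.
Qed.

Lemma quest_neg a : ProvP (PImp (PQ (QNeg a)) (PNeg (PQ a))).
Proof.
  unfold QNeg, PNeg. apply (p_trans _ _ _ (P_QK a QBot)).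
  apply (P_MP _ _ (P_S (PQ a) (PQ QBot) PZero)). apply p_weaken, P_QBot.
Qed.

Lemma bang_neg_refutes p : ProvQ (QImp (QBang (PNeg p)) (QNeg (QBang p))).
Proof.
  unfold QNeg. apply (q_trans _ _ _ (Q_BK p PZero)). apply q_post, Q_B0.
Qed.

Lemma neg_to_bang_neg_quest a : ProvQ (QImp (QNeg a) (QBang (PNeg (PQ a)))).
Proof.
  apply (q_trans _ (QBang (PQ (QNeg a)))); [apply Q_NablaI |].
  apply (Q_MP _ _ (Q_BK _ _)), Q_Bang, quest_neg.
Qed.

Lemma bang_neg_quest_to_neg a : ProvQ (QImp (QBang (PNeg (PQ a))) (QNeg a)).
Proof.
  unfold QNeg. apply q_swap. apply (q_trans _ (QBang (PQ a))); [apply Q_NablaI |].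
  apply q_swap, bang_neg_refutes.
Qed.

Lemma nabla_to_dneg a : ProvQ (QImp (Nabla a) (QNeg (QNeg a))).
Proof.
  unfold Nabla. apply q_swap.
  exact (q_trans _ _ _ (neg_to_bang_neg_quest a) (bang_neg_refutes (PQ a))).
Qed.

Theorem proposition2p21 (a : prob) :
  QEquiv (QNeg (QNeg a)) (Nabla a) <-> stable (PQ a).
Proof.
  unfold QEquiv, QIff, stable, QEntails. split.
  - (* ~!~?a => ~~a => Nabla a *)
    intro Hequiv. pose proof (Q_MP _ _ (Q_AE1 _ _) Hequiv) as Hdneg_nabla.
    exact (q_trans _ _ _ (q_contra _ _ (neg_to_bang_neg_quest a)) Hdneg_nabla).
  - (* ~~a => ~!~?a => Nabla a, and the converse is fact (2) *)
    intro Hstable.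
    assert (Hdneg_nabla : ProvQ (QImp (QNeg (QNeg a)) (Nabla a)))
      by exact (q_trans _ _ _ (q_contra _ _ (bang_neg_quest_to_neg a)) Hstable).
    exact (Q_MP _ _ (Q_MP _ _ (Q_AI _ _) Hdneg_nabla) (nabla_to_dneg a)).
Qed.
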